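(* Let $\psi:[0,1]\to[0,1]$ be a convex, strictly increasing, surjective, three times differentiable function with $\psi'>0$ on $(0,1]$ such that $x\psi'(x)/\psi(x)$ and $x\psi''(x)/\psi'(x)$ are strictly increasing on $(0,1]$. Let $n\ge2$ and for $r\ge0$ let $\phi_*(r)=\min\{\|(y,r)\|_\psi:\ y\in\mathbb R_+^{n-1},\ \|y\|_\psi=1\}$. Then $\phi_*(r)=\|(1,r)\|_\psi$ for all $r\ge0$, where $(1,r)\in\mathbb R^2$.
   Context: For $\psi:[0,1]\to[0,1]$ a continuous strictly increasing bijection and $v\in\mathbb R^k$ (any $k$), $\|v\|_\psi$ is $0$ if $v=0$ and otherwise the unique $s>0$ with $\sum_{i=1}^k\psi(|v_i|/s)=1$. $(y,r)\in\mathbb R^n$ denotes $y$ with $r$ appended. *)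

From Stdlib Require Import Reals List ClassicalEpsilon.
Import ListNotations.
Open Scope R_scope.

Definition I01 (x : R) : Prop := 0 <= x <= 1.

Definition deriv_within (f : R -> R) (D : R -> Prop) (x l : R) : Prop :=
  forall eps, 0 < eps -> exists delta, 0 < delta /\
    forall h, h <> 0 -> Rabs h < delta -> D (x + h) ->
      Rabs ((f (x + h) - f x) / h - l) < eps.

(* psi_norm_rel psi v s : s is ||v||_psi, i.e. s = 0 if v = 0, otherwise
   s > 0 is such that sum_i psi(|v_i|/s) = 1 (with all |v_i|/s in the
   domain [0,1] of psi). *)
Definition psi_norm_rel (psi : R -> R) (v : list R) (s : R) : Prop :=
  ((forall x, In x v -> x = 0) /\ s = 0) \/
  ((exists x, In x v /\ x <> 0) /\ 0 < s /\
   (forall x, In x v -> Rabs x / s <= 1) /\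
   fold_right Rplus 0 (map (fun x => psi (Rabs x / s)) v) = 1).

Definition psi_norm (psi : R -> R) (v : list R) : R :=
  epsilon (inhabits 0) (psi_norm_rel psi v).

From Stdlib Require Import Reals List Lra Lia Classical ClassicalEpsilon.
From Coquelicot Require Import Coquelicot.
Import ListNotations.
Open Scope R_scope.

(* The psi-norm of v is the root s of the decreasing function s |-> sum_i psi(|v_i|/s) - 1;
   it exists by the intermediate value theorem, and every s with sum_i psi(|v_i|/s) >= 1 is
   at most the norm.  Since x psi'(x)/psi(x) increases, s |-> psi(s x)/psi(s) is nonincreasing,
   hence psi(t) psi(x) <= psi(t x).  Let s = ||(1,r)||, so psi(1/s) + psi(r/s) = 1.  If
   ||y|| = 1 then sum_i psi(|y_i|/s) + psi(r/s) >= psi(1/s) sum_i psi(|y_i|) + psi(r/s) = 1,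
   so ||(y,r)|| >= s, with equality at y = (1,0,...,0). *)

Definition lsum (f : R -> R) (v : list R) : R := fold_right Rplus 0 (map f v).

Lemma lsum_app f u v : lsum f (u ++ v) = lsum f u + lsum f v.
Proof.
  unfold lsum; rewrite map_app, fold_right_app.
  induction u as [|a u IH]; simpl; [ring | rewrite IH; ring].
Qed.

Lemma lsum_scal c f v : lsum (fun x => c * f x) v = c * lsum f v.
Proof. induction v as [|a v IH]; unfold lsum in *; simpl; [ring | rewrite IH; ring]. Qed.

Lemma lsum_eq0 f v : (forall x, In x v -> f x = 0) -> lsum f v = 0.
Proof.
  induction v as [|a v IH]; intros H; unfold lsum in *; simpl; [reflexivity|].
  rewrite H, IH; [ring | intros; apply H; right; assumption | left; reflexivity].
Qed.

Lemma lsum_le f g v : (forall x, In x v -> f x <= g x) -> lsum f v <= lsum g v.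
Proof.
  induction v as [|a v IH]; intros H; unfold lsum in *; simpl; [lra|].
  assert (f a <= g a) by (apply H; left; reflexivity).
  assert (fold_right Rplus 0 (map f v) <= fold_right Rplus 0 (map g v))
    by (apply IH; intros; apply H; right; assumption).
  lra.
Qed.

Lemma lsum_lt f g v : (forall x, In x v -> f x <= g x) ->
  (exists x, In x v /\ f x < g x) -> lsum f v < lsum g v.
Proof.
  induction v as [|a v IH]; intros H [x [Hx Hlt]]; [contradiction|].
  unfold lsum in *; simpl; destruct Hx as [<-|Hx].
  - assert (fold_right Rplus 0 (map f v) <= fold_right Rplus 0 (map g v))
      by (apply lsum_le; intros; apply H; right; assumption).
    lra.
  - assert (f a <= g a) by (apply H; left; reflexivity).
    assert (fold_right Rplus 0 (map f v) < fold_right Rplus 0 (map g v))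
      by (apply IH; [intros; apply H; right | exists x]; auto).
    lra.
Qed.

Lemma lsum_ge_term f v a : (forall x, In x v -> 0 <= f x) -> In a v -> f a <= lsum f v.
Proof.
  intros Hnn Ha.
  apply in_split in Ha as [u [w ->]].
  rewrite lsum_app; unfold lsum at 2; simpl.
  pose proof (lsum_le (fun _ => 0) f u) as Hu.
  pose proof (lsum_le (fun _ => 0) f w) as Hw.
  rewrite lsum_eq0 in Hu, Hw by reflexivity.
  assert (0 <= lsum f u) by (apply Hu; intros; apply Hnn, in_or_app; left; assumption).
  assert (0 <= lsum f w) by (apply Hw; intros; apply Hnn, in_or_app; right; right; assumption).
  unfold lsum in *; lra.
Qed.

Lemma lsum_continuity (F : R -> R -> R) v :
  (forall x, continuity (F x)) -> continuity (fun u => lsum (fun x => F x u) v).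
Proof.
  intros HF; induction v as [|a v IH]; unfold lsum in *; simpl.
  - apply continuity_const; intros ? ?; reflexivity.
  - exact (continuity_plus _ _ (HF a) IH).
Qed.

Lemma lsum_ext f g v : (forall x, In x v -> f x = g x) -> lsum f v = lsum g v.
Proof.
  intros H; apply Rle_antisym; apply lsum_le; intros x Hx; rewrite H by assumption; lra.
Qed.

Lemma exists_max_abs (v : list R) :
  v <> [] -> exists a, In a v /\ forall x, In x v -> Rabs x <= Rabs a.
Proof.
  induction v as [|b v IH]; intros Hne; [congruence|].
  destruct v as [|c w].
  - exists b; split; [left; reflexivity | intros x [->|[]]; lra].
  - destruct IH as [a [Ha Hmax]]; [congruence|].
    destruct (Rle_dec (Rabs a) (Rabs b)).
    + exists b; split; [left; reflexivity|].
      intros x [->|Hx]; [lra | specialize (Hmax x Hx); lra].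
    + exists a; split; [right; assumption|].
      intros x [->|Hx]; [lra | auto].
Qed.

(* Precomposing with clamp extends a function on [0,1] to R, so that Stdlib's pointwise
   continuity and Coquelicot's derivatives apply to it. *)
Definition clamp (u : R) : R := Rmax 0 (Rmin 1 u).

Lemma clamp_I01 u : I01 (clamp u).
Proof. unfold clamp, I01, Rmax, Rmin; repeat destruct Rle_dec; lra. Qed.

Lemma clamp_id u : I01 u -> clamp u = u.
Proof. unfold clamp, I01, Rmax, Rmin; repeat destruct Rle_dec; lra. Qed.

Lemma clamp_lipschitz a b : Rabs (clamp a - clamp b) <= Rabs (a - b).
Proof.
  unfold clamp, Rmax, Rmin; repeat destruct Rle_dec; unfold Rabs;
    repeat destruct Rcase_abs; lra.
Qed.

Lemma continuity_clamp_comp f :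
  (forall x, I01 x -> limit1_in f I01 (f x) x) -> continuity (fun u => f (clamp u)).
Proof.
  intros Hf u eps Heps.
  destruct (Hf (clamp u) (clamp_I01 u) eps Heps) as [delta [Hdelta Hclose]].
  exists delta; split; [assumption|].
  intros x [_ Hx]; apply Hclose; split; [apply clamp_I01|].
  simpl in *; unfold Rdist in *.
  eapply Rle_lt_trans; [apply clamp_lipschitz | exact Hx].
Qed.

Lemma deriv_within_limit1_in f D x l :
  deriv_within f D x l -> D x -> limit1_in f D (f x) x.
Proof.
  intros Hd Hx eps Heps.
  destruct (Hd 1 Rlt_0_1) as [delta0 [Hdelta0 Hq]].
  assert (Hl : 0 < Rabs l + 1) by (pose proof (Rabs_pos l); lra).
  exists (Rmin delta0 (eps / (Rabs l + 1))); split.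
  { apply Rmin_pos; [assumption | apply Rdiv_lt_0_compat; lra]. }
  intros z [Hz Hzx]; simpl in *; unfold Rdist in *.
  destruct (Req_dec z x) as [->|Hzx0].
  { unfold Rminus; rewrite Rplus_opp_r, Rabs_R0; lra. }
  set (h := z - x) in *.
  assert (Hh : Rabs h < delta0) by (eapply Rlt_le_trans; [exact Hzx | apply Rmin_l]).
  assert (Hh2 : Rabs h < eps / (Rabs l + 1))
    by (eapply Rlt_le_trans; [exact Hzx | apply Rmin_r]).
  assert (Hh' : Rabs h * (Rabs l + 1) < eps).
  { apply (Rmult_lt_compat_r (Rabs l + 1)) in Hh2; [|lra].
    unfold Rdiv in Hh2; rewrite Rmult_assoc, Rinv_l, Rmult_1_r in Hh2 by lra.
    exact Hh2. }
  assert (Hh0 : h <> 0) by (unfold h; lra).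
  replace z with (x + h) in Hz |- * by (unfold h; ring).
  specialize (Hq h Hh0 Hh Hz).
  assert (Hquot : Rabs ((f (x + h) - f x) / h) <= Rabs l + 1).
  { pose proof (Rabs_triang ((f (x + h) - f x) / h - l) l) as T.
    replace ((f (x + h) - f x) / h - l + l) with ((f (x + h) - f x) / h) in T by ring.
    lra. }
  replace (f (x + h) - f x) with (h * ((f (x + h) - f x) / h)) by (field; exact Hh0).
  rewrite Rabs_mult.
  eapply Rle_lt_trans; [|exact Hh'].
  apply Rmult_le_compat_l; [apply Rabs_pos | exact Hquot].
Qed.

Lemma is_derive_clamp_comp f x l :
  deriv_within f I01 x l -> 0 < x < 1 -> is_derive (fun u => f (clamp u)) x l.
Proof.
  intros Hd Hx; apply is_derive_Reals; intros eps Heps.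
  destruct (Hd eps Heps) as [delta [Hdelta Hq]].
  assert (Hpos : 0 < Rmin delta (Rmin x (1 - x)))
    by (apply Rmin_pos; [assumption | apply Rmin_pos; lra]).
  exists (mkposreal _ Hpos); intros h Hh0 Hh; simpl in Hh.
  pose proof (Rmin_l delta (Rmin x (1 - x))); pose proof (Rmin_r delta (Rmin x (1 - x))).
  pose proof (Rmin_l x (1 - x)); pose proof (Rmin_r x (1 - x)).
  assert (Hxh : I01 (x + h)) by (unfold I01, Rabs in *; destruct Rcase_abs; lra).
  rewrite !clamp_id by (assumption || (unfold I01; lra)).
  apply Hq; [assumption | lra | assumption].
Qed.

Lemma derive_nonpos_le f df a b : a <= b ->
  (forall c, a < c < b -> is_derive f c (df c)) ->
  (forall c, a <= c <= b -> continuity_pt f c) ->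
  (forall c, a <= c <= b -> df c <= 0) -> f b <= f a.
Proof.
  intros Hab Hd Hc Hneg.
  destruct (MVT_gen f a b df) as [c [Hc' E]];
    rewrite ?Rmin_left, ?Rmax_right in * by assumption; auto.
  specialize (Hneg c Hc'); nra.
Qed.

Definition has_nonzero (v : list R) : Prop := exists x, In x v /\ x <> 0.

Definition scaled_in_unit (v : list R) (s : R) : Prop :=
  forall x, In x v -> Rabs x / s <= 1.

Section PsiNorm.

Variable psi : R -> R.
Hypothesis psi_I01 : forall x, I01 x -> I01 (psi x).
Hypothesis psi_onto : forall y, I01 y -> exists x, I01 x /\ psi x = y.
Hypothesis psi_incr : forall x y, I01 x -> I01 y -> x < y -> psi x < psi y.
Hypothesis psi_cont : forall x, I01 x -> limit1_in psi I01 (psi x) x.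

Lemma psi_0 : psi 0 = 0.
Proof.
  destruct (psi_onto 0) as [x [Hx Hpx]]; [unfold I01; lra|].
  destruct (Req_dec x 0) as [->|Hx0]; [assumption|].
  assert (psi 0 < psi x) by (apply psi_incr; unfold I01 in *; lra).
  assert (I01 (psi 0)) by (apply psi_I01; unfold I01; lra).
  unfold I01 in *; lra.
Qed.

Lemma psi_1 : psi 1 = 1.
Proof.
  destruct (psi_onto 1) as [x [Hx Hpx]]; [unfold I01; lra|].
  destruct (Req_dec x 1) as [->|Hx1]; [assumption|].
  assert (psi x < psi 1) by (apply psi_incr; unfold I01 in *; lra).
  assert (I01 (psi 1)) by (apply psi_I01; unfold I01; lra).
  unfold I01 in *; lra.
Qed.

Lemma psi_le x y : I01 x -> I01 y -> x <= y -> psi x <= psi y.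
Proof.
  intros Hx Hy [Hlt | ->]; [left; apply psi_incr; assumption | lra].
Qed.

Lemma psi_pos x : 0 < x <= 1 -> 0 < psi x.
Proof. intros Hx; rewrite <- psi_0; apply psi_incr; unfold I01; lra. Qed.

Definition psi_sum (v : list R) (s : R) : R := lsum (fun x => psi (Rabs x / s)) v.

Lemma psi_norm_rel_pos v s : psi_norm_rel psi v s -> has_nonzero v ->
  0 < s /\ scaled_in_unit v s /\ psi_sum v s = 1.
Proof.
  intros [[Hz _]|[_ Hs]] [x [Hx Hx0]]; [exfalso; apply Hx0, Hz, Hx | exact Hs].
Qed.

Lemma psi_sum_lt v s s' : has_nonzero v -> 0 < s < s' -> scaled_in_unit v s ->
  psi_sum v s' < psi_sum v s.
Proof.
  intros [x0 [Hx0 Hx00]] Hss Hv.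
  assert (Hshrink : forall x, In x v ->
    I01 (Rabs x / s') /\ I01 (Rabs x / s) /\ Rabs x / s' <= Rabs x / s).
  { intros x Hx; pose proof (Hv x Hx); pose proof (Rabs_pos x).
    assert (Rabs x / s' <= Rabs x / s)
      by (apply Rmult_le_compat_l; [lra | apply Rinv_le_contravar; lra]).
    assert (0 <= Rabs x / s') by (apply Rle_mult_inv_pos; lra).
    unfold I01; lra. }
  apply lsum_lt.
  - intros x Hx; destruct (Hshrink x Hx) as [? [? ?]]; apply psi_le; assumption.
  - exists x0; split; [assumption|].
    destruct (Hshrink x0 Hx0) as [? [? _]]; apply psi_incr; try assumption.
    apply Rmult_lt_compat_l; [apply Rabs_pos_lt; assumption | apply Rinv_lt_contravar; nra].
Qed.

Lemma psi_norm_rel_ge v s s' : psi_norm_rel psi v s' ->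
  0 < s -> scaled_in_unit v s -> 1 <= psi_sum v s -> s <= s'.
Proof.
  intros Hrel Hs Hv Hsum.
  destruct Hrel as [[Hz _]|[Hnz [Hs' [Hv' Hsum']]]].
  - exfalso; assert (psi_sum v s = 0); [|lra].
    apply lsum_eq0; intros x Hx; rewrite (Hz x Hx), Rabs_R0, Rdiv_0_l; apply psi_0.
  - apply Rnot_lt_le; intros Hlt.
    pose proof (psi_sum_lt v s' s Hnz (conj Hs' Hlt) Hv').
    change (psi_sum v s' = 1) in Hsum'; lra.
Qed.

Lemma psi_norm_rel_unique v s s' :
  psi_norm_rel psi v s -> psi_norm_rel psi v s' -> s = s'.
Proof.
  intros Hs Hs'.
  destruct (classic (has_nonzero v)) as [Hnz|Hz].
  - destruct (psi_norm_rel_pos v s Hs Hnz) as [? [? E]].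
    destruct (psi_norm_rel_pos v s' Hs' Hnz) as [? [? E']].
    apply Rle_antisym; eapply psi_norm_rel_ge; eauto; lra.
  - destruct Hs as [[_ ->]|[? _]]; [|contradiction].
    destruct Hs' as [[_ ->]|[? _]]; [reflexivity|contradiction].
Qed.

Lemma psi_clamp_sum_root v a : In a v -> (forall x, In x v -> Rabs x <= Rabs a) ->
  0 < Rabs a -> exists z, 0 < z <= / Rabs a /\ lsum (fun x => psi (clamp (z * Rabs x))) v = 1.
Proof.
  intros Ha Hmax HM.
  set (G := fun z => lsum (fun x => psi (clamp (z * Rabs x))) v - 1).
  assert (HG : continuity G).
  { apply continuity_minus; [|apply continuity_const; intros ? ?; reflexivity].
    apply (lsum_continuity (fun x z => psi (clamp (z * Rabs x)))); intros x.
    apply (continuity_comp (fun z => z * Rabs x) (fun u => psi (clamp u))).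
    - apply continuity_mult; [apply derivable_continuous, derivable_id|].
      apply continuity_const; intros ? ?; reflexivity.
    - apply continuity_clamp_comp; assumption. }
  assert (HG0 : G 0 = -1).
  { unfold G; rewrite lsum_eq0; [ring|].
    intros x _; rewrite Rmult_0_l, clamp_id; [apply psi_0 | unfold I01; lra]. }
  assert (HGa : 0 <= G (/ Rabs a)).
  { assert (Hterm : psi (clamp (/ Rabs a * Rabs a)) = 1)
      by (rewrite Rinv_l, clamp_id by (unfold I01; lra); apply psi_1).
    pose proof (lsum_ge_term (fun x => psi (clamp (/ Rabs a * Rabs x))) v a) as Hge.
    simpl in Hge; rewrite Hterm in Hge; unfold G.
    assert (1 <= lsum (fun x => psi (clamp (/ Rabs a * Rabs x))) v); [|lra].
    apply Hge; [intros x _; apply psi_I01, clamp_I01 | exact Ha]. }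
  assert (Hroot : exists z, 0 < z <= / Rabs a /\ G z = 0).
  { destruct (Req_dec (G (/ Rabs a)) 0) as [E|E].
    - exists (/ Rabs a); split; [split; [apply Rinv_0_lt_compat|]; lra | exact E].
    - destruct (IVT G 0 (/ Rabs a) HG) as [z [Hz Gz]];
        [apply Rinv_0_lt_compat; assumption | lra | lra |].
      exists z; split; [|exact Gz].
      destruct (Req_dec z 0) as [->|]; [rewrite HG0 in Gz; lra | lra]. }
  destruct Hroot as [z [Hz Gz]]; exists z; split; [exact Hz | unfold G in Gz; lra].
Qed.

Lemma psi_norm_rel_exists v : exists s, psi_norm_rel psi v s.
Proof.
  destruct (classic (has_nonzero v)) as [[x0 [Hx0 Hx00]]|Hz].
  2:{ exists 0; left; split; [|reflexivity].
      intros x Hx; apply NNPP; intros Hx0; apply Hz; exists x; auto. }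
  destruct (exists_max_abs v) as [a [Ha Hmax]]; [intros ->; contradiction|].
  assert (HM : 0 < Rabs a)
    by (pose proof (Hmax x0 Hx0); pose proof (Rabs_pos_lt x0 Hx00); lra).
  destruct (psi_clamp_sum_root v a Ha Hmax HM) as [z [[Hz0 Hza] Hsum]].
  assert (Hzx : forall x, In x v -> I01 (z * Rabs x)).
  { intros x Hx; pose proof (Hmax x Hx); pose proof (Rabs_pos x); split; [nra|].
    apply (Rmult_le_compat_r (Rabs a)) in Hza; [|lra].
    rewrite Rinv_l in Hza by lra; nra. }
  assert (Hscale : forall x, Rabs x / / z = z * Rabs x)
    by (intros x; unfold Rdiv; rewrite Rinv_inv; ring).
  exists (/ z); right; split; [exists x0; auto|].
  split; [apply Rinv_0_lt_compat; assumption|]; split.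
  - intros x Hx; rewrite Hscale; apply Hzx, Hx.
  - change (lsum (fun x => psi (Rabs x / / z)) v = 1); rewrite <- Hsum.
    apply lsum_ext; intros x Hx; rewrite Hscale, clamp_id; [reflexivity | apply Hzx, Hx].
Qed.

Lemma psi_norm_spec v : psi_norm_rel psi v (psi_norm psi v).
Proof. unfold psi_norm; apply epsilon_spec, psi_norm_rel_exists. Qed.

Lemma psi_norm_eq v s : psi_norm_rel psi v s -> psi_norm psi v = s.
Proof. intros Hs; exact (psi_norm_rel_unique v _ s (psi_norm_spec v) Hs). Qed.

Lemma psi_norm_ge v s :
  0 < s -> scaled_in_unit v s -> 1 <= psi_sum v s -> s <= psi_norm psi v.
Proof. intros; eapply psi_norm_rel_ge; eauto; apply psi_norm_spec. Qed.

Lemma psi_sum_insert_zeros u k w s :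
  psi_sum (u ++ repeat 0 k ++ w) s = psi_sum (u ++ w) s.
Proof.
  unfold psi_sum; rewrite !lsum_app, (lsum_eq0 _ (repeat 0 k)); [ring|].
  intros x Hx; apply repeat_spec in Hx as ->; rewrite Rabs_R0, Rdiv_0_l; apply psi_0.
Qed.

Lemma psi_norm_insert_zeros u k w :
  psi_norm psi (u ++ repeat 0 k ++ w) = psi_norm psi (u ++ w).
Proof.
  assert (Hin : forall x, In x (u ++ repeat 0 k ++ w) -> In x (u ++ w) \/ x = 0).
  { intros x Hx; apply in_app_or in Hx as [Hx|Hx]; [left; apply in_or_app; auto|].
    apply in_app_or in Hx as [Hx|Hx]; [right; apply repeat_spec in Hx; auto|].
    left; apply in_or_app; auto. }
  assert (Hin' : forall x, In x (u ++ w) -> In x (u ++ repeat 0 k ++ w)).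
  { intros x Hx; apply in_app_or in Hx as [Hx|Hx]; apply in_or_app; auto.
    right; apply in_or_app; auto. }
  apply psi_norm_eq; destruct (psi_norm_spec (u ++ w)) as [[Hz Hs]|[Hnz [Hs [Hsc Hsum]]]].
  - left; split; [|assumption].
    intros x Hx; destruct (Hin x Hx); auto.
  - right; split; [destruct Hnz as [x [? ?]]; exists x; auto|].
    split; [assumption|]; split.
    + intros x Hx; destruct (Hin x Hx) as [Hx' | ->]; [apply Hsc, Hx'|].
      rewrite Rabs_R0, Rdiv_0_l; lra.
    + exact (eq_trans (psi_sum_insert_zeros u k w _) Hsum).
Qed.

Lemma psi_norm_unit : psi_norm psi [1] = 1.
Proof.
  apply psi_norm_eq; right; split; [exists 1; split; [left|]; auto; lra|].
  split; [lra|]; split.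
  - intros x [<- | []]; rewrite Rabs_R1; lra.
  - simpl; rewrite Rabs_R1, Rdiv_1_r, psi_1; ring.
Qed.

Variable d1 : R -> R.
Hypothesis psi_deriv : forall x, I01 x -> deriv_within psi I01 x (d1 x).
Hypothesis elasticity_incr : forall x y, 0 < x <= 1 -> 0 < y <= 1 -> x < y ->
  x * d1 x / psi x < y * d1 y / psi y.

(* c times the numerator is psi(cx) psi(c) (e(cx) - e(c)), where e(u) = u psi'(u) / psi(u). *)
Lemma psi_ratio_deriv_nonpos x c : 0 < x < 1 -> 0 < c <= 1 ->
  (x * d1 (c * x) * psi c - psi (c * x) * d1 c) / psi c ^ 2 <= 0.
Proof.
  intros Hx Hc.
  assert (Hcx : 0 < c * x <= 1) by (split; nra).
  pose proof (psi_pos _ Hcx) as Pcx; pose proof (psi_pos _ Hc) as Pc.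
  pose proof (elasticity_incr (c * x) c Hcx Hc ltac:(nra)) as He.
  set (ecx := c * x * d1 (c * x) / psi (c * x)) in He.
  set (ec := c * d1 c / psi c) in He.
  assert (Hnum : c * (x * d1 (c * x) * psi c - psi (c * x) * d1 c)
                 = psi (c * x) * psi c * (ecx - ec)) by (unfold ecx, ec; field; lra).
  assert (x * d1 (c * x) * psi c - psi (c * x) * d1 c < 0).
  { assert (0 < psi (c * x) * psi c) by nra. nra. }
  apply Rmult_le_reg_r with (psi c ^ 2); [nra|].
  unfold Rdiv; rewrite Rmult_assoc, Rinv_l by nra; nra.
Qed.

Lemma psi_mul_ge t x : I01 t -> I01 x -> psi t * psi x <= psi (t * x).
Proof.
  intros Ht Hx.
  destruct (Req_dec t 0) as [->|Ht0]; [rewrite psi_0, !Rmult_0_l, psi_0; lra|].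
  destruct (Req_dec x 0) as [->|Hx0]; [rewrite psi_0, !Rmult_0_r, psi_0; lra|].
  destruct (Req_dec x 1) as [->|Hx1]; [rewrite psi_1, !Rmult_1_r; lra|].
  unfold I01 in Ht, Hx.
  set (P := fun u => psi (clamp u)).
  set (q := fun s => P (s * x) / P s).
  assert (HP : forall u, 0 < u <= 1 -> P u = psi u)
    by (intros u Hu; unfold P; rewrite clamp_id; [|unfold I01]; auto; lra).
  assert (HPc : continuity P) by (apply continuity_clamp_comp, psi_cont).
  assert (Hq : q 1 <= q t).
  { apply (derive_nonpos_le q
      (fun c => (x * d1 (c * x) * psi c - psi (c * x) * d1 c) / psi c ^ 2)); [lra| | |].
    - intros c Hc; unfold q.
      rewrite <- (HP c), <- (HP (c * x)) by (split; nra).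
      apply (is_derive_div (fun s => P (s * x)) P c);
        [| apply is_derive_clamp_comp; [apply psi_deriv; unfold I01|]; lra |].
      + apply (is_derive_comp P (fun s => s * x) c (d1 (c * x)) x).
        * apply is_derive_clamp_comp; [apply psi_deriv; unfold I01|]; split; nra.
        * auto_derive; [exact I | ring].
      + rewrite HP by lra; apply Rgt_not_eq, psi_pos; lra.
    - intros c Hc; unfold q.
      apply (continuity_pt_div (fun s => P (s * x)) P); [|apply HPc|].
      + apply (continuity_pt_comp (fun s => s * x) P); [|apply HPc].
        apply derivable_continuous_pt; exists x; apply is_derive_Reals; auto_derive;
          [exact I | ring].
      + rewrite HP by lra; apply Rgt_not_eq, psi_pos; lra.
    - intros c Hc; apply psi_ratio_deriv_nonpos; lra. }
  unfold q in Hq; rewrite !HP, Rmult_1_l, psi_1, Rdiv_1_r in Hq by (split; nra).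
  pose proof (psi_pos t ltac:(lra)).
  apply (Rmult_le_compat_l (psi t)) in Hq; [|lra].
  unfold Rdiv in Hq; rewrite Rmult_comm in Hq.
  replace (psi t * (psi (t * x) * / psi t)) with (psi (t * x)) in Hq by (field; lra).
  lra.
Qed.

Lemma psi_norm_app_ge y r : 0 <= r -> psi_norm psi y = 1 ->
  psi_norm psi [1; r] <= psi_norm psi (y ++ [r]).
Proof.
  intros Hr Hy.
  set (s := psi_norm psi [1; r]).
  destruct (psi_norm_rel_pos [1; r] s (psi_norm_spec _)) as [Hs [Hsc Hsum]].
  { exists 1; split; [left; reflexivity | lra]. }
  assert (Hy_nz : has_nonzero y).
  { apply NNPP; intros Hz; destruct (psi_norm_spec y) as [[_ H0]|[Hnz _]]; [lra | auto]. }
  destruct (psi_norm_rel_pos y 1) as [_ [Hsc_y Hsum_y]];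
    [rewrite <- Hy; apply psi_norm_spec | exact Hy_nz |].
  pose proof (Hsc 1 ltac:(left; reflexivity)) as Ht.
  pose proof (Hsc r ltac:(right; left; reflexivity)) as Hrs.
  unfold psi_sum, lsum in Hsum; simpl in Hsum.
  rewrite Rabs_R1 in Hsum, Ht; rewrite Rabs_right in Hsum, Hrs by lra.
  unfold Rdiv in Hsum, Ht; rewrite Rmult_1_l in Hsum, Ht.
  assert (Hinv : 0 < / s) by (apply Rinv_0_lt_compat; exact Hs).
  apply psi_norm_ge; [exact Hs | |].
  - intros x Hx; apply in_app_or in Hx as [Hx|[<-|[]]]; [|rewrite Rabs_right; lra].
    pose proof (Hsc_y x Hx); pose proof (Rabs_pos x); rewrite Rdiv_1_r in *.
    unfold Rdiv; nra.
  - unfold psi_sum; rewrite lsum_app; unfold lsum at 2; simpl; rewrite Rabs_right by lra.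
    assert (psi (/ s) * psi_sum y 1 <= psi_sum y s);
      [|rewrite Hsum_y in *; unfold psi_sum in *; lra].
    unfold psi_sum; rewrite <- lsum_scal; apply lsum_le; intros x Hx.
    pose proof (Hsc_y x Hx); pose proof (Rabs_pos x); rewrite Rdiv_1_r in *.
    replace (Rabs x / s) with (/ s * Rabs x) by (unfold Rdiv; ring).
    apply psi_mul_ge; unfold I01; lra.
Qed.

End PsiNorm.

Theorem lemma5p2 (psi d1 d2 d3 : R -> R) (n : nat) (r : R) :
  (forall x, I01 x -> I01 (psi x)) ->
  (forall y, I01 y -> exists x, I01 x /\ psi x = y) ->
  (forall x y, I01 x -> I01 y -> x < y -> psi x < psi y) ->
  (forall x y t, I01 x -> I01 y -> I01 t ->
     psi (t * x + (1 - t) * y) <= t * psi x + (1 - t) * psi y) ->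
  (forall x, I01 x -> deriv_within psi I01 x (d1 x)) ->
  (forall x, I01 x -> deriv_within d1 I01 x (d2 x)) ->
  (forall x, I01 x -> deriv_within d2 I01 x (d3 x)) ->
  (forall x, 0 < x <= 1 -> 0 < d1 x) ->
  (forall x y, 0 < x <= 1 -> 0 < y <= 1 -> x < y ->
     x * d1 x / psi x < y * d1 y / psi y) ->
  (forall x y, 0 < x <= 1 -> 0 < y <= 1 -> x < y ->
     x * d2 x / d1 x < y * d2 y / d1 y) ->
  (2 <= n)%nat ->
  0 <= r ->
  (exists y : list R, length y = (n - 1)%nat /\ (forall x, In x y -> 0 <= x) /\
     psi_norm psi y = 1 /\ psi_norm psi (y ++ [r]) = psi_norm psi [1; r]) /\
  (forall y : list R, length y = (n - 1)%nat -> (forall x, In x y -> 0 <= x) ->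
     psi_norm psi y = 1 -> psi_norm psi [1; r] <= psi_norm psi (y ++ [r])).
Proof.
  intros Hin Honto Hincr _ Hd1 _ _ _ Helast _ Hn Hr.
  assert (Hcont : forall x, I01 x -> limit1_in psi I01 (psi x) x)
    by (intros x Hx; exact (deriv_within_limit1_in psi I01 x (d1 x) (Hd1 x Hx) Hx)).
  split.
  - exists (1 :: repeat 0 (n - 2)); split; [simpl; rewrite repeat_length; lia|].
    split; [intros x [<- | Hx]; [lra | apply repeat_spec in Hx; lra]|].
    split.
    + rewrite <- (app_nil_r (repeat 0 (n - 2))).
      change (psi_norm psi ([1] ++ repeat 0 (n - 2) ++ []) = 1).
      rewrite psi_norm_insert_zeros by assumption; apply psi_norm_unit; assumption.
    + change (psi_norm psi ([1] ++ repeat 0 (n - 2) ++ [r]) = psi_norm psi [1; r]).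
      apply psi_norm_insert_zeros; assumption.
  - intros y _ _ Hy; apply (psi_norm_app_ge psi Hin Honto Hincr Hcont d1); assumption.
Qed.
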